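(* Let $T(p)=\exp(-(-\ln p)^\alpha)$ for $p\in[0,1]$ with parameter $\alpha>0$, $\alpha\ne1$, and let $\tilde T(p):=1-T(1-p)=1-\exp(-(-\ln(1-p))^\alpha)$. (1) If $\alpha>1$ (so $T$ is S-shaped), then $p^*(\alpha):=\inf\{p\in[0,1):\tilde T'(p)\ge\frac{1-\tilde T(p)}{1-p}\}$ equals $p^*(\alpha)=1-\exp\big(-\alpha^{-\frac{1}{\alpha-1}}\big)$. (2) If $\alpha<1$ (so $T$ is inverse S-shaped), then $p^*(\alpha):=\sup\{p\in[0,1):\tilde T'(p)\le\tilde T(p)/p\}$ equals $p^*(\alpha)=1-\exp(-x)$, where $x$ is the unique solution of $$x=\Big(\ln\big(\alpha x^{\alpha-1}e^x(1-e^{-x})+1\big)\Big)^{1/\alpha}.$$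
   Context: $T$ is the Prelec probability weighting function with parameter $\alpha$. *)

From Stdlib Require Export Reals.
From Coquelicot Require Export Coquelicot.
Open Scope R_scope.

Definition prelecT (alpha p : R) : R := exp (- Rpower (- ln p) alpha).

Definition prelecTt (alpha p : R) : R := 1 - prelecT alpha (1 - p).

Definition fp_eq (alpha x : R) : Prop :=
  x = Rpower (ln (alpha * Rpower x (alpha - 1) * exp x * (1 - exp (- x)) + 1)) (/ alpha).

(* Put u = -ln(1 - p) ([neglog1m p]).  Then 1 - T~(p) = exp(-u^a) and
   T~'(p) = a u^(a-1) exp(-u^a) / (1 - p), so the condition of (1) reads
   a u^(a-1) >= 1, i.e. u >= a^(-1/(a-1)) when a > 1.
   With phi(s) = (e^s - 1)/s ([exp_slope]), the condition of (2) reads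
   a phi(u) <= phi(u^a) and the fixed-point equation reads phi(x^a) = a phi(x).
   Since ln phi is increasing and convex, D(u) = ln phi(u^a) - ln phi(u)
   ([exp_slope_gap]) is >= 0 > ln a on (0, 1], while for a < 1 it decreases
   on [1, oo) with slope at most (a - 1) (ln phi)'(1) < 0.  Hence D crosses
   ln a exactly once, at some x, and the condition of (2) holds exactly when
   u <= x. *)

From Stdlib Require Import Reals Lra Psatz.
From Coquelicot Require Import Coquelicot.
Open Scope R_scope.

Lemma is_derive_continuity_pt f x df : is_derive f x df -> continuity_pt f x.
Proof.
  intros Hd. apply continuity_pt_filterlim.
  exact (ex_derive_continuous f x (ex_intro _ df Hd)).
Qed.

Lemma MVT_lower_bound f df a b m : a <= b ->
  (forall x, a <= x <= b -> is_derive f x (df x)) ->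
  (forall x, a <= x <= b -> m <= df x) -> m * (b - a) <= f b - f a.
Proof.
  intros Hab Hd Hm.
  destruct (MVT_gen f a b df) as [c [Hc ->]];
    rewrite Rmin_left, Rmax_right in * by lra.
  - intros x Hx. apply Hd; lra.
  - intros x Hx. apply (is_derive_continuity_pt f x (df x)), Hd; lra.
  - specialize (Hm c Hc). nra.
Qed.

Lemma MVT_upper_bound f df a b m : a <= b ->
  (forall x, a <= x <= b -> is_derive f x (df x)) ->
  (forall x, a <= x <= b -> df x <= m) -> f b - f a <= m * (b - a).
Proof.
  intros Hab Hd Hm.
  enough (- m * (b - a) <= - f b - - f a) by lra.
  apply (MVT_lower_bound (fun x => - f x) (fun x => - df x)); [lra| |].
  - intros x Hx. exact (is_derive_opp f x (df x) (Hd x Hx)).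
  - intros x Hx. specialize (Hm x Hx). lra.
Qed.

Lemma nondecreasing_of_derive_nonneg f df a b : a <= b ->
  (forall x, a <= x <= b -> is_derive f x (df x)) ->
  (forall x, a <= x <= b -> 0 <= df x) -> f a <= f b.
Proof.
  intros Hab Hd Hpos. pose proof (MVT_lower_bound f df a b 0 Hab Hd Hpos). lra.
Qed.

Lemma exp_le_exp x y : exp x <= exp y <-> x <= y.
Proof.
  split; intros H.
  - destruct (Rle_lt_dec x y) as [|Hlt]; [easy|].
    pose proof (exp_increasing y x Hlt). lra.
  - destruct (Rle_lt_or_eq_dec x y H) as [Hlt| ->]; [|lra].
    left. now apply exp_increasing.
Qed.

Lemma ln_le_ln x y : 0 < x -> 0 < y -> (ln x <= ln y <-> x <= y).
Proof.
  intros Hx Hy. rewrite <- exp_le_exp, !exp_ln by assumption. reflexivity.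
Qed.

Lemma Rpower_sub_1 u a : 0 < u -> Rpower u (a - 1) = Rpower u a / u.
Proof.
  intros Hu. unfold Rminus. rewrite Rpower_plus, Rpower_Ropp, Rpower_1 by easy. reflexivity.
Qed.

Lemma eq_Rpower_inv_iff x y a : 0 < x -> 0 < y -> a <> 0 ->
  (x = Rpower y (/ a) <-> Rpower x a = y).
Proof.
  intros Hx Hy Ha. split; intros H.
  - rewrite H, Rpower_mult, Rinv_l, Rpower_1 by easy. reflexivity.
  - rewrite <- H, Rpower_mult, Rinv_r, Rpower_1 by easy. reflexivity.
Qed.

Lemma Glb_Rbar_of_threshold (P : R -> Prop) c : 0 < c < 1 ->
  (forall p, 0 < p < 1 -> (P p <-> c <= p)) ->
  Glb_Rbar (fun p => 0 < p < 1 /\ P p) = Finite c.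
Proof.
  intros Hc HP. apply is_glb_Rbar_unique. split.
  - intros q [Hq HPq]. now apply HP.
  - intros l Hl. apply Hl. split; [easy|]. apply HP; lra.
Qed.

Lemma Lub_Rbar_of_threshold (P : R -> Prop) c : 0 < c < 1 ->
  (forall p, 0 < p < 1 -> (P p <-> p <= c)) ->
  Lub_Rbar (fun p => 0 < p < 1 /\ P p) = Finite c.
Proof.
  intros Hc HP. apply is_lub_Rbar_unique. split.
  - intros q [Hq HPq]. now apply HP.
  - intros l Hl. apply Hl. split; [easy|]. apply HP; lra.
Qed.

Lemma unique_crossing (g : R -> R) c k : 0 < k ->
  (forall u, 0 < u <= 1 -> c < g u) ->
  (forall u, 1 <= u -> continuity_pt g u) ->
  (forall u v, 1 <= u <= v -> g v - g u <= - k * (v - u)) ->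
  exists x, 0 < x /\ g x = c /\ (forall u, 0 < u -> g u = c -> u = x) /\
    (forall u, 0 < u -> (c <= g u <-> u <= x)).
Proof.
  intros Hk Hsmall Hcont Hslope.
  pose proof (Hsmall 1 ltac:(lra)) as Hg1.
  set (U := 2 + (g 1 - c) / k).
  assert (HU : 1 < U).
  { assert (0 < (g 1 - c) / k) by (apply Rdiv_lt_0_compat; lra). unfold U. lra. }
  assert (HgU : g U < c).
  { pose proof (Hslope 1 U ltac:(lra)).
    replace (- k * (U - 1)) with (- k - (g 1 - c)) in * by (unfold U; field; lra). lra. }
  destruct (Ranalysis5.IVT_interv (fun u => c - g u) 1 U) as [x [Hx Hgx]]; [|lra|lra|lra|].
  { intros u Hu. apply continuity_pt_minus; [apply continuity_pt_const; now intros ? ?|].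
    apply Hcont. lra. }
  assert (Hx1 : 1 < x) by (destruct (Rle_lt_or_eq_dec 1 x (proj1 Hx)); [easy|subst; lra]).
  assert (Habove : forall u, 0 < u -> u < x -> c < g u).
  { intros u Hu Hux. destruct (Rle_lt_dec u 1); [now apply Hsmall; lra|].
    pose proof (Hslope u x ltac:(lra)). nra. }
  assert (Hbelow : forall u, x < u -> g u < c).
  { intros u Hxu. pose proof (Hslope x u ltac:(lra)). nra. }
  exists x. split; [lra|]. split; [lra|]. split.
  - intros u Hu Hgu. destruct (Rtotal_order u x) as [Hlt|[Heq|Hgt]]; [| easy |].
    + specialize (Habove u Hu Hlt). lra.
    + specialize (Hbelow u Hgt). lra.
  - intros u Hu. split.
    + intros Hgu. destruct (Rle_lt_dec u x) as [|Hgt]; [easy|].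
      specialize (Hbelow u Hgt). lra.
    + intros Hux. destruct (Rle_lt_or_eq_dec u x Hux) as [Hlt| ->]; [|lra].
      left. now apply Habove.
Qed.

Lemma sinh_ge t : 0 <= t -> 2 * t <= exp t - exp (- t).
Proof.
  intros Ht.
  enough (exp 0 - exp (- 0) - 2 * 0 <= exp t - exp (- t) - 2 * t)
    by (rewrite Ropp_0, exp_0 in *; lra).
  apply (nondecreasing_of_derive_nonneg (fun x => exp x - exp (- x) - 2 * x)
           (fun x => exp x + exp (- x) - 2)); [easy| |].
  - intros x _. auto_derive; [easy|ring].
  - intros x _.
    assert (Hinv : exp x * exp (- x) = 1)
      by (rewrite <- exp_plus, Rplus_opp_r; apply exp_0).
    pose proof (exp_pos x). pose proof (exp_pos (- x)).
    pose proof (Rmult_le_pos _ _ (Rlt_le _ _ (exp_pos (- x))) (pow2_ge_0 (exp x - 1))).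
    nra.
Qed.

Definition exp_slope (s : R) : R := (exp s - 1) / s.
Definition ln_exp_slope (s : R) : R := ln (exp_slope s).
Definition dln_exp_slope (s : R) : R := exp s / (exp s - 1) - / s.

Lemma exp_sub1_gt s : 0 < s -> s < exp s - 1.
Proof. intros Hs. pose proof (exp_ineq1 s). lra. Qed.

Lemma exp_slope_pos s : 0 < s -> 0 < exp_slope s.
Proof. intros Hs. pose proof (exp_sub1_gt s Hs). apply Rdiv_lt_0_compat; lra. Qed.

Lemma is_derive_ln_exp_slope s : 0 < s ->
  is_derive ln_exp_slope s (dln_exp_slope s).
Proof.
  intros Hs. pose proof (exp_sub1_gt s Hs). unfold ln_exp_slope, exp_slope, dln_exp_slope.
  auto_derive.
  - repeat split; try lra. apply Rdiv_lt_0_compat; lra.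
  - field. lra.
Qed.

Lemma dln_exp_slope_pos s : 0 < s -> 0 < dln_exp_slope s.
Proof.
  intros Hs. pose proof (exp_sub1_gt s Hs).
  assert (Hinv : exp s * exp (- s) = 1)
    by (rewrite <- exp_plus, Rplus_opp_r; apply exp_0).
  pose proof (exp_ineq1 (- s) ltac:(lra)). pose proof (exp_pos s).
  replace (dln_exp_slope s) with ((s * exp s - (exp s - 1)) / ((exp s - 1) * s))
    by (unfold dln_exp_slope; field; lra).
  apply Rdiv_lt_0_compat; nra.
Qed.

(* (e^s - 1)^2 - s^2 e^s factors as (e^s - 1 - s e^(s/2)) (e^s - 1 + s e^(s/2)),
   and the first factor is e^(s/2) (2 sinh(s/2) - s). *)
Lemma expm1_sq_ge s : 0 < s -> s * s * exp s <= (exp s - 1) * (exp s - 1).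
Proof.
  intros Hs. pose proof (sinh_ge (s / 2) ltac:(lra)) as Hsinh.
  set (h := exp (s / 2)) in *.
  assert (Hh : 0 < h) by apply exp_pos.
  assert (Hhinv : h * exp (- (s / 2)) = 1)
    by (unfold h; rewrite <- exp_plus, Rplus_opp_r; apply exp_0).
  assert (Hsq : exp s = h * h) by (unfold h; rewrite <- exp_plus; f_equal; lra).
  assert (Hfac : 0 <= h * h - 1 - s * h).
  { pose proof (exp_pos (- (s / 2))). nra. }
  rewrite Hsq.
  replace ((h * h - 1) * (h * h - 1)) with
    ((h * h - 1 - s * h) * (h * h - 1 + s * h) + s * s * (h * h)) by ring.
  pose proof (Rmult_le_pos _ _ Hfac (ltac:(nra) : 0 <= h * h - 1 + s * h)). lra.
Qed.

Lemma dln_exp_slope_nondecreasing a b : 0 < a -> a <= b ->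
  dln_exp_slope a <= dln_exp_slope b.
Proof.
  intros Ha Hab.
  apply (nondecreasing_of_derive_nonneg _
           (fun s => / (s * s) - exp s / ((exp s - 1) * (exp s - 1)))); [easy| |].
  - intros s Hs. pose proof (exp_sub1_gt s ltac:(lra)).
    unfold dln_exp_slope. auto_derive.
    + repeat split; lra.
    + field. lra.
  - intros s Hs. pose proof (exp_sub1_gt s ltac:(lra)). pose proof (expm1_sq_ge s ltac:(lra)).
    replace (/ (s * s) - exp s / ((exp s - 1) * (exp s - 1)))
      with (((exp s - 1) * (exp s - 1) - s * s * exp s) / ((s * s) * ((exp s - 1) * (exp s - 1))))
      by (field; lra).
    apply Rdiv_le_0_compat; [lra|]. apply Rmult_lt_0_compat; nra.
Qed.

Lemma ln_exp_slope_nondecreasing a b : 0 < a -> a <= b ->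
  ln_exp_slope a <= ln_exp_slope b.
Proof.
  intros Ha Hab. apply (nondecreasing_of_derive_nonneg _ dln_exp_slope); [easy| |].
  - intros s Hs. apply is_derive_ln_exp_slope. lra.
  - intros s Hs. left. apply dln_exp_slope_pos. lra.
Qed.

Definition neglog1m (p : R) : R := - ln (1 - p).

Lemma neglog1m_pos p : 0 < p < 1 -> 0 < neglog1m p.
Proof.
  intros Hp. unfold neglog1m.
  pose proof (ln_increasing (1 - p) 1 ltac:(lra) ltac:(lra)). rewrite ln_1 in *. lra.
Qed.

Lemma exp_neg_neglog1m p : p < 1 -> exp (- neglog1m p) = 1 - p.
Proof. intros Hp. unfold neglog1m. rewrite Ropp_involutive, exp_ln; lra. Qed.

Lemma neglog1m_le_iff p t : p < 1 -> (neglog1m p <= t <-> p <= 1 - exp (- t)).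
Proof.
  intros Hp.
  transitivity (exp (- t) <= exp (- neglog1m p)).
  - rewrite exp_le_exp. split; intros; lra.
  - rewrite exp_neg_neglog1m by easy. split; intros; lra.
Qed.

Lemma le_neglog1m_iff p t : p < 1 -> (t <= neglog1m p <-> 1 - exp (- t) <= p).
Proof.
  intros Hp.
  transitivity (exp (- neglog1m p) <= exp (- t)).
  - rewrite exp_le_exp. split; intros; lra.
  - rewrite exp_neg_neglog1m by easy. split; intros; lra.
Qed.

Lemma one_minus_exp_neg_bounds t : 0 < t -> 0 < 1 - exp (- t) < 1.
Proof.
  intros Ht. pose proof (exp_pos (- t)).
  pose proof (exp_increasing (- t) 0 ltac:(lra)). rewrite exp_0 in *. lra.
Qed.

Lemma one_minus_prelecTt a p :
  1 - prelecTt a p = exp (- Rpower (neglog1m p) a).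
Proof. unfold prelecTt, prelecT, neglog1m. ring. Qed.

Lemma Derive_prelecTt a p : 0 < p < 1 ->
  Derive (prelecTt a) p
  = a * Rpower (neglog1m p) (a - 1) * exp (- Rpower (neglog1m p) a) / (1 - p).
Proof.
  intros Hp. pose proof (neglog1m_pos p Hp) as Hu.
  rewrite Rpower_sub_1 by easy.
  apply is_derive_unique. unfold prelecTt, prelecT, Rpower, neglog1m in *.
  auto_derive.
  - unfold Rminus in *. repeat split; lra.
  - unfold Rminus in *. field. lra.
Qed.

Lemma one_le_mul_Rpower_iff a u : 1 < a -> 0 < u ->
  (1 <= a * Rpower u (a - 1) <-> Rpower a (- / (a - 1)) <= u).
Proof.
  intros Ha Hu.
  assert (Hpow : 0 < a * Rpower u (a - 1)) by (apply Rmult_lt_0_compat; [lra|apply exp_pos]).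
  rewrite <- (ln_le_ln 1) by lra.
  rewrite <- (ln_le_ln (Rpower a _)) by (easy || apply exp_pos).
  rewrite ln_1, ln_mult, !ln_Rpower by (lra || apply exp_pos).
  replace (ln a + (a - 1) * ln u) with ((a - 1) * (ln u - - / (a - 1) * ln a))
    by (field; lra).
  split; intros; nra.
Qed.

Lemma prelecTt_S_condition_iff a p : 1 < a -> 0 < p < 1 ->
  (Derive (prelecTt a) p >= (1 - prelecTt a p) / (1 - p)
   <-> Rpower a (- / (a - 1)) <= neglog1m p).
Proof.
  intros Ha Hp.
  rewrite <- one_le_mul_Rpower_iff by (easy || now apply neglog1m_pos).
  rewrite Derive_prelecTt, one_minus_prelecTt by easy.
  set (K := exp (- Rpower (neglog1m p) a) / (1 - p)).
  assert (HK : 0 < K) by (apply Rdiv_lt_0_compat; [apply exp_pos|lra]).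
  replace (a * Rpower (neglog1m p) (a - 1) * exp (- Rpower (neglog1m p) a) / (1 - p))
    with (a * Rpower (neglog1m p) (a - 1) * K) by (unfold K; field; lra).
  split; intros; nra.
Qed.

Lemma prelecTt_inverse_S_condition_iff a p : 0 < p < 1 ->
  (Derive (prelecTt a) p <= prelecTt a p / p
   <-> a * exp_slope (neglog1m p) <= exp_slope (Rpower (neglog1m p) a)).
Proof.
  intros Hp.
  assert (HT : prelecTt a p = 1 - exp (- Rpower (neglog1m p) a))
    by (rewrite <- one_minus_prelecTt; ring).
  rewrite Derive_prelecTt, HT, Rpower_sub_1 by (easy || now apply neglog1m_pos).
  pose proof (exp_neg_neglog1m p ltac:(lra)) as Hq.
  pose proof (neglog1m_pos p Hp) as Hu.
  set (u := neglog1m p) in *. set (E := Rpower u a).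
  assert (HE : 0 < E) by apply exp_pos.
  pose proof (exp_sub1_gt u Hu). pose proof (exp_sub1_gt E HE).
  rewrite !exp_Ropp in *.
  set (A := exp u) in *. set (B := exp E) in *.
  assert (Hp' : p = 1 - / A) by lra. rewrite Hp'.
  unfold exp_slope. fold A B.
  set (K := E * A / (B * (A - 1))).
  assert (HK : 0 < K) by (unfold K; apply Rdiv_lt_0_compat; nra).
  replace (a * (E / u) * / B / (1 - (1 - / A))) with (K * (a * ((A - 1) / u)))
    by (unfold K; field; repeat split; lra).
  replace ((1 - / B) / (1 - / A)) with (K * ((B - 1) / E))
    by (unfold K; field; repeat split; lra).
  split; intros; nra.
Qed.

Lemma fp_eq_iff a x : 0 < a -> 0 < x ->
  (fp_eq a x <-> exp_slope (Rpower x a) = a * exp_slope x).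
Proof.
  intros Ha Hx. unfold fp_eq.
  set (E := Rpower x a).
  assert (HE : 0 < E) by apply exp_pos.
  pose proof (exp_sub1_gt x Hx) as Hx1.
  assert (HG : a * Rpower x (a - 1) * exp x * (1 - exp (- x)) + 1
               = a * E * exp_slope x + 1).
  { rewrite Rpower_sub_1, exp_Ropp by easy. unfold exp_slope, E. field. lra. }
  assert (HaEs : 0 < a * E * exp_slope x).
  { pose proof (exp_slope_pos x Hx). apply Rmult_lt_0_compat; [nra|easy]. }
  assert (HlnG : 0 < ln (a * E * exp_slope x + 1))
    by (rewrite <- ln_1; apply ln_increasing; lra).
  rewrite HG, eq_Rpower_inv_iff by (easy || lra). fold E.
  transitivity (exp E = a * E * exp_slope x + 1).
  - split; intros Heq.
    + rewrite Heq at 1. apply exp_ln. lra.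
    + rewrite <- Heq. symmetry. apply ln_exp.
  - assert (HexpE : exp E = E * exp_slope E + 1) by (unfold exp_slope; field; lra).
    rewrite HexpE. split; intros Heq.
    + apply (Rmult_eq_reg_l E); lra.
    + rewrite Heq. ring.
Qed.

Definition exp_slope_gap (a u : R) : R := ln_exp_slope (Rpower u a) - ln_exp_slope u.

Lemma ln_le_exp_slope_gap_iff a u : 0 < a -> 0 < u ->
  (ln a <= exp_slope_gap a u <-> a * exp_slope u <= exp_slope (Rpower u a)).
Proof.
  intros Ha Hu. pose proof (exp_slope_pos u Hu) as Hu'.
  pose proof (exp_slope_pos (Rpower u a) (exp_pos _)) as HE'.
  rewrite <- (ln_le_ln (a * exp_slope u)), ln_mult by (nra || easy).
  unfold exp_slope_gap, ln_exp_slope. split; intros; lra.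
Qed.

Lemma exp_slope_gap_eq_ln_iff a u : 0 < a -> 0 < u ->
  (exp_slope_gap a u = ln a <-> exp_slope (Rpower u a) = a * exp_slope u).
Proof.
  intros Ha Hu. pose proof (exp_slope_pos u Hu) as Hu'.
  pose proof (exp_slope_pos (Rpower u a) (exp_pos _)) as HE'.
  unfold exp_slope_gap, ln_exp_slope. split; intros Heq.
  - apply ln_inv; [easy|nra|]. rewrite ln_mult by easy. lra.
  - rewrite Heq, ln_mult by easy. ring.
Qed.

Lemma exp_slope_gap_nonneg a u : a <= 1 -> 0 < u <= 1 -> 0 <= exp_slope_gap a u.
Proof.
  intros Ha Hu. unfold exp_slope_gap.
  enough (Hua : u <= Rpower u a)
    by (pose proof (ln_exp_slope_nondecreasing u _ ltac:(lra) Hua); lra).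
  unfold Rpower. rewrite <- (exp_ln u) at 1 by lra. apply exp_le_exp.
  pose proof (ln_le u 1 ltac:(lra) ltac:(lra)). rewrite ln_1 in *. nra.
Qed.

Definition dexp_slope_gap (a u : R) : R :=
  a * Rpower u (a - 1) * dln_exp_slope (Rpower u a) - dln_exp_slope u.

Lemma is_derive_exp_slope_gap a u : 0 < u ->
  is_derive (exp_slope_gap a) u (dexp_slope_gap a u).
Proof.
  intros Hu.
  apply (is_derive_minus (fun v => ln_exp_slope (Rpower v a)) ln_exp_slope).
  - apply (is_derive_comp ln_exp_slope (fun v => Rpower v a)).
    + apply is_derive_ln_exp_slope, exp_pos.
    + apply is_derive_Reals, derivable_pt_lim_power, Hu.
  - now apply is_derive_ln_exp_slope.
Qed.

(* For u >= 1 we have 1 <= u^a <= u and a u^(a-1) <= a, and (ln phi)' is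
   increasing, so the first term is at most a (ln phi)'(u). *)
Lemma dexp_slope_gap_le a u : 0 < a < 1 -> 1 <= u ->
  dexp_slope_gap a u <= (a - 1) * dln_exp_slope 1.
Proof.
  intros Ha Hu. unfold dexp_slope_gap.
  assert (HE1 : 1 <= Rpower u a)
    by (rewrite <- (Rpower_O u) by lra; apply Rle_Rpower; lra).
  assert (HEu : Rpower u a <= u)
    by (rewrite <- (Rpower_1 u) at 2 by lra; apply Rle_Rpower; lra).
  assert (Hu1 : Rpower u (a - 1) <= Rpower u 0) by (apply Rle_Rpower; lra).
  rewrite Rpower_O in Hu1 by lra.
  pose proof (exp_pos ((a - 1) * ln u)) as Hu0. fold (Rpower u (a - 1)) in Hu0.
  pose proof (dln_exp_slope_nondecreasing (Rpower u a) u ltac:(lra) HEu).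
  pose proof (dln_exp_slope_nondecreasing 1 u ltac:(lra) Hu).
  pose proof (dln_exp_slope_pos (Rpower u a) ltac:(lra)).
  assert (a * Rpower u (a - 1) * dln_exp_slope (Rpower u a) <= a * dln_exp_slope u).
  { apply Rle_trans with (a * dln_exp_slope (Rpower u a)); [|nra].
    apply Rmult_le_compat_r; nra. }
  nra.
Qed.

Lemma exp_slope_gap_decreasing a u v : 0 < a < 1 -> 1 <= u <= v ->
  exp_slope_gap a v - exp_slope_gap a u <= - ((1 - a) * dln_exp_slope 1) * (v - u).
Proof.
  intros Ha Huv. apply (MVT_upper_bound _ (dexp_slope_gap a)); [lra| |].
  - intros w Hw. apply is_derive_exp_slope_gap. lra.
  - intros w Hw. replace (- ((1 - a) * dln_exp_slope 1)) with ((a - 1) * dln_exp_slope 1)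
      by ring.
    apply dexp_slope_gap_le; lra.
Qed.

Theorem corollary4p3 (alpha : R) (Hpos : 0 < alpha) (Hne : alpha <> 1) :
  (1 < alpha ->
     Glb_Rbar (fun p => 0 < p < 1 /\
                 Derive (prelecTt alpha) p >= (1 - prelecTt alpha p) / (1 - p))
     = Finite (1 - exp (- Rpower alpha (- / (alpha - 1)))))
  /\
  (alpha < 1 ->
     exists x : R, 0 < x /\ fp_eq alpha x /\
       (forall y : R, 0 < y -> fp_eq alpha y -> y = x) /\
       Lub_Rbar (fun p => 0 < p < 1 /\
                   Derive (prelecTt alpha) p <= prelecTt alpha p / p)
       = Finite (1 - exp (- x))).
Proof.
  split; intros Halpha.
  - apply Glb_Rbar_of_threshold; [apply one_minus_exp_neg_bounds, exp_pos|].
    intros p Hp. rewrite prelecTt_S_condition_iff, le_neglog1m_iff by (easy || lra).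
    reflexivity.
  - assert (Hln : ln alpha < 0) by (rewrite <- ln_1; apply ln_increasing; lra).
    destruct (unique_crossing (exp_slope_gap alpha) (ln alpha)
                ((1 - alpha) * dln_exp_slope 1)) as (x & Hx & Hgx & Huniq & Hle).
    + pose proof (dln_exp_slope_pos 1 ltac:(lra)). nra.
    + intros u Hu. pose proof (exp_slope_gap_nonneg alpha u ltac:(lra) Hu). lra.
    + intros u Hu. eapply is_derive_continuity_pt, is_derive_exp_slope_gap. lra.
    + intros u v Huv. now apply exp_slope_gap_decreasing; [lra|].
    + exists x. split; [easy|]. split; [|split].
      * apply fp_eq_iff, exp_slope_gap_eq_ln_iff; easy.
      * intros y Hy Hfp. apply Huniq; [easy|].
        now apply exp_slope_gap_eq_ln_iff, fp_eq_iff.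
      * apply Lub_Rbar_of_threshold; [now apply one_minus_exp_neg_bounds|].
        intros p Hp. pose proof (neglog1m_pos p Hp).
        rewrite prelecTt_inverse_S_condition_iff, <- ln_le_exp_slope_gap_iff, Hle,
          neglog1m_le_iff by (easy || lra).
        reflexivity.
Qed.
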